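(* Let $G$ be a graph, $X\subseteq T\subseteq V(G)$, $k'$ an integer, and let $(L^*,R^* )$ be a lean $(X,T,k')$-witness. Let $T'=(T\setminus L^* )\cup(L^*\cap R^* )$. Then the adhesion of $T'$ is at most $\max(|L^*\cap R^*|,\sigma(T))$, and $|T|-|T'|\ge \frac{|L^*\cap T|}{2\max\{1,|L^*\cap R^*|\}}$.
   Context: A vertex cut of $G$ is an ordered pair $(L,R)$ with $L\cup R=V(G)$, $L\setminus R,R\setminus L\ne\emptyset$ and no edge between $L\setminus R$ and $R\setminus L$. The adhesion $\sigma(Z)$ of a set $Z$ is the maximum over connected components $C$ of $G\setminus Z$ of $|N_G(C)|$. An $(X,T,k')$-witness is a vertex cut $(L,R)$ of $G$ with $|L\cap R|\le k'$, $|L\cap T|>|L\cap R|$, and $X\subseteq R$. It is lean if there exist $|L\cap R|$ vertex-disjoint paths in $G[L]$, one starting from each vertex of $L\cap R$, each ending at a vertex of $L\cap T$. *)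

From mathcomp Require Import all_boot all_order all_algebra.
Set Implicit Arguments. Unset Strict Implicit. Unset Printing Implicit Defensive.

Definition simple_graph (V : finType) (e : rel V) :=
  symmetric e /\ irreflexive e.

Section Graph.
Variables (V : finType) (e : rel V).

Definition rel_minus (Z : {set V}) : rel V :=
  [rel x y | [&& e x y, x \notin Z & y \notin Z]].

(* the connected component of G \ Z containing v (meaningful when v \notin Z) *)
Definition comp_of (Z : {set V}) (v : V) : {set V} :=
  [set u | connect (rel_minus Z) v u].

Definition nbh (C : {set V}) : {set V} :=
  [set u | (u \notin C) && [exists c in C, e c u]].

(* adhesion sigma(Z) = max over components C of G \ Z of |N_G(C)| (0 if none) *)
Definition adhesion (Z : {set V}) : nat :=
  \max_(v | v \notin Z) #|nbh (comp_of Z v)|.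

Definition vertex_cut (L R : {set V}) : Prop :=
  [/\ L :|: R = setT, L :\: R != set0, R :\: L != set0 &
      forall x y, x \in L :\: R -> y \in R :\: L -> ~~ e x y].

Definition witness (X T : {set V}) (k' : int) (L R : {set V}) : Prop :=
  [/\ vertex_cut L R, (#|L :&: R|%:Z <= k')%R,
      #|L :&: T| > #|L :&: R| & X \subset R].

(* lean: |L∩R| vertex-disjoint paths in G[L], one from each s in L∩R
   (the path s :: p s), each ending in L∩T *)
Definition lean (T L R : {set V}) : Prop :=
  exists p : V -> seq V,
    (forall s, s \in L :&: R ->
       [/\ path e s (p s), all (mem L) (s :: p s) & last s (p s) \in T]) /\
    (forall s s', s \in L :&: R -> s' \in L :&: R -> s != s' ->
       [disjoint [seq x | x <- s :: p s] & [seq x | x <- s' :: p s']]).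

End Graph.

From mathcomp Require Import all_boot all_order all_algebra.
From mathcomp Require Import zify.
Import GRing.Theory Num.Theory.

Set Implicit Arguments.
Unset Strict Implicit.
Unset Printing Implicit Defensive.

(* A component C of G \ T' either lies in L \ R, where its boundary can only
   be L ∩ R, or lies in R \ L outside T.  In the latter case C sits inside a
   component C' of G \ T, and the boundary of C injects into that of C': a
   vertex of T is kept, a vertex s of L ∩ R \ T is sent to the first vertex of
   T on its lean path, which is reached from s through L \ T.  Disjointness of
   the lean paths, and the fact that they stay in L while the kept vertices
   lie outside L, make this map injective.  The counting bound is arithmetic:
   |T| - |T'| = |L ∩ T| - |L ∩ R| > 0. *)

Section ConnectInvariant.
Variables (V : finType) (r : rel V).

Lemma connect_closed_in (P : pred V) x y :
  (forall x y, P x -> r x y -> P y) -> P x -> connect r x y -> P y.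
Proof.
move=> Pr + /connectP[q]; elim: q x => [|z q IHq] x /=; first by move=> ? _ ->.
by move=> Px /andP[rxz rq]; apply: IHq rq; apply: Pr rxz.
Qed.

Lemma connect_sub_in (r' : rel V) (P : pred V) x y :
  (forall x y, P x -> r x y -> P y) ->
  (forall x y, P x -> P y -> r x y -> r' x y) ->
  P x -> connect r x y -> connect r' x y.
Proof.
move=> Pr r'r Px xy.
suff /andP[] : P y && connect r' x y by [].
apply: (@connect_closed_in (fun z => P z && connect r' x z) x y _ _ xy).
  move=> z w /andP[Pz xz] rzw; have Pw := Pr _ _ Pz rzw.
  by rewrite Pw (connect_trans xz) ?connect1 ?r'r.
by rewrite Px connect0.
Qed.

End ConnectInvariant.

Section Components.
Variables (V : finType) (e : rel V).
Implicit Types (Z A : {set V}) (v : V).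

Lemma rel_minusE Z x y :
  rel_minus e Z x y = [&& e x y, x \notin Z & y \notin Z].
Proof. by []. Qed.

Lemma comp_of_sub Z A v :
  v \in A ->
  (forall x y, x \in A -> e x y -> x \notin Z -> y \notin Z -> y \in A) ->
  comp_of e Z v \subset A.
Proof.
move=> vA Aclosed; apply/subsetP => u; rewrite inE.
by apply: connect_closed_in vA => x y xA /and3P[]; apply: Aclosed.
Qed.

Lemma comp_of_subC Z v : v \notin Z -> comp_of e Z v \subset ~: Z.
Proof. by move=> vZ; apply: comp_of_sub => [|x y _ _ _]; rewrite inE. Qed.

Lemma nbh_comp_of_sub Z v : v \notin Z -> nbh e (comp_of e Z v) \subset Z.
Proof.
move=> vZ; apply/subsetP => u.
rewrite inE => /andP[uC /existsP[c /andP[cC ecu]]].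
have cZ : c \notin Z by have := subsetP (comp_of_subC vZ) _ cC; rewrite inE.
rewrite inE in cC; apply: contraNT uC => uZ; rewrite inE (connect_trans cC) //.
by apply: connect1; rewrite rel_minusE ecu cZ uZ.
Qed.

Lemma mem_nbh_comp_of Z v c z :
  v \notin Z -> c \in comp_of e Z v -> e c z -> z \in Z ->
  z \in nbh e (comp_of e Z v).
Proof.
move=> vZ cC ecz zZ; rewrite inE; apply/andP; split.
  by apply: contraL zZ => /(subsetP (comp_of_subC vZ)); rewrite inE.
by apply/existsP; exists c; rewrite cC ecz.
Qed.

Lemma comp_of_subset Z Z' v :
  comp_of e Z' v \subset ~: Z -> comp_of e Z' v \subset comp_of e Z v.
Proof.
move=> CZ; apply/subsetP => u; rewrite [u \in _]inE inE.
apply: (@connect_sub_in _ _ _ (mem (comp_of e Z' v)));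
  rewrite ?inE ?connect0 //.
  by move=> x y; rewrite !inE => vx /connect1; apply: connect_trans.
move=> x y /(subsetP CZ) + /(subsetP CZ); rewrite !inE => xZ yZ /and3P[exy _ _].
by rewrite rel_minusE exy xZ yZ.
Qed.

Lemma card_nbh_comp_of_le_adhesion Z v :
  v \notin Z -> #|nbh e (comp_of e Z v)| <= adhesion e Z.
Proof.
exact: (@leq_bigmax_cond _ (fun w => w \notin Z)
                         (fun w => #|nbh e (comp_of e Z w)|)).
Qed.

Fixpoint first_in Z (x : V) (s : seq V) : V :=
  if x \in Z then x else if s is y :: s' then first_in Z y s' else x.

Lemma first_in_id Z x s : x \in Z -> first_in Z x s = x.
Proof. by case: s => [|y s] /= ->. Qed.

Lemma first_in_mem Z x s : first_in Z x s \in x :: s.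
Proof.
elim: s x => [|y s IHs] x /=; first by case: ifP; rewrite inE.
by case: ifP => _; rewrite inE ?eqxx // IHs orbT.
Qed.

Lemma first_in_in Z x s : last x s \in Z -> first_in Z x s \in Z.
Proof. by elim: s x => [|y s IHs] x /=; case: ifP => // _ /IHs. Qed.

Lemma first_in_reach Z x s :
  path e x s -> x \notin Z -> last x s \in Z ->
  exists2 c, connect (rel_minus e Z) x c & e c (first_in Z x s).
Proof.
elim: s x => [|y s IHs] x /=; first by move=> _ /negPf ->.
case/andP=> exy ys /negPf xZ lastZ; rewrite xZ.
have [yZ | yZ] := boolP (y \in Z).
  by exists x; rewrite ?connect0 ?first_in_id.
have [c yc ecz] := IHs y ys yZ lastZ; exists c => //.
by apply: connect_trans yc; apply: connect1; rewrite rel_minusE exy xZ.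
Qed.

End Components.

Section Rerouting.
Variables (V : finType) (e : rel V).
Hypothesis e_sym : symmetric e.
Variables (L R T : {set V}).
Hypothesis cutLR : vertex_cut e L R.

Local Notation T' := ((T :\: L) :|: (L :&: R)).

Lemma cut_cover x : x \in L :|: R.
Proof. by case: cutLR => -> *; rewrite inE. Qed.

Lemma cut_edge_left x y : e x y -> x \in L :\: R -> y \in L.
Proof.
case: cutLR => _ _ _ noedge exy xLR; apply: contraLR exy => yL.
apply: noedge; rewrite // inE yL.
by move: (cut_cover y); rewrite inE (negPf yL).
Qed.

Lemma cut_edge_right x y : e x y -> x \in R :\: L -> y \in R.
Proof.
case: cutLR => _ _ _ noedge exy xRL; apply: contraLR exy => yR; rewrite e_sym.
apply: noedge; rewrite // inE yR /=.
by move: (cut_cover y); rewrite inE (negPf yR) orbF.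
Qed.

Lemma notin_rerouted v : v \notin T' -> v \in L :\: R \/ v \in (R :\: L) :\: T.
Proof.
move: (cut_cover v); rewrite !inE.
by case: (v \in L); case: (v \in R); case: (v \in T); auto.
Qed.

Lemma left_notin_rerouted v : v \in L :\: R -> v \notin T'.
Proof. by rewrite !inE; case: (v \in L); case: (v \in R). Qed.

Lemma right_notin_rerouted v : v \in (R :\: L) :\: T -> v \notin T'.
Proof. by rewrite !inE; case: (v \in L); case: (v \in R); case: (v \in T). Qed.

Lemma card_rerouted : #|T'| + #|L :&: T| = #|T| + #|L :&: R|.
Proof.
have disjTLR : (T :\: L) :&: (L :&: R) = set0.
  by apply/setP => x; rewrite !inE; case: (x \in L); rewrite ?andbF.
by rewrite cardsU disjTLR cards0 subn0 -(cardsID L T) [T :&: L]setIC; lia.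
Qed.

Lemma left_comp_sub v : v \in L :\: R -> comp_of e T' v \subset L :\: R.
Proof.
move=> vLR; apply: comp_of_sub => // x y xLR exy _.
by rewrite !inE (cut_edge_left exy xLR) /= andbT.
Qed.

Lemma card_nbh_left_comp v :
  v \in L :\: R -> #|nbh e (comp_of e T' v)| <= #|L :&: R|.
Proof.
move=> vLR; apply/subset_leq_card/subsetP => u uN.
have := subsetP (nbh_comp_of_sub e (left_notin_rerouted vLR)) _ uN.
move: uN; rewrite inE => /andP[_ /existsP[c /andP[cC ecu]]].
by rewrite !inE (cut_edge_left ecu (subsetP (left_comp_sub vLR) _ cC)).
Qed.

Lemma right_comp_sub v : v \in R :\: L -> comp_of e T' v \subset R :\: L.
Proof.
move=> vRL; apply: comp_of_sub => // x y xRL exy _.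
by rewrite !inE (cut_edge_right exy xRL) andbT; case: (y \in L).
Qed.

Lemma right_comp_subset v :
  v \in (R :\: L) :\: T -> comp_of e T' v \subset comp_of e T v.
Proof.
move=> vRLT; have vT' := right_notin_rerouted vRLT.
case/setDP: vRLT => vRL _; apply: comp_of_subset; apply/subsetP => u uC.
have := subsetP (comp_of_subC e vT') _ uC.
have := subsetP (right_comp_sub vRL) _ uC.
by rewrite !inE; case: (u \in L); case: (u \in T).
Qed.

Section LeanPaths.
Variable p : V -> seq V.
Hypothesis p_path : forall s, s \in L :&: R ->
  [/\ path e s (p s), all (mem L) (s :: p s) & last s (p s) \in T].
Hypothesis p_disjoint :
  forall s s', s \in L :&: R -> s' \in L :&: R -> s != s' ->
  [disjoint [seq x | x <- s :: p s] & [seq x | x <- s' :: p s']].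

Let f u := first_in T u (p u).

Lemma first_in_nbh_right_comp v u :
  v \in (R :\: L) :\: T -> u \in nbh e (comp_of e T' v) ->
  f u \in nbh e (comp_of e T v).
Proof.
move=> vRLT uN; have vT' := right_notin_rerouted vRLT.
have /setDP[_ vT] := vRLT.
have uT' := subsetP (nbh_comp_of_sub e vT') _ uN.
move: uN; rewrite inE => /andP[_ /existsP[c /andP[cC ecu]]].
have cC' := subsetP (right_comp_subset vRLT) _ cC.
have [uT | uT] := boolP (u \in T).
  by rewrite /f first_in_id // (mem_nbh_comp_of vT cC').
have uLR : u \in L :&: R by move: uT'; rewrite !inE (negPf uT) andbF.
have [pu _ lastT] := p_path uLR.
have [c' uc' ec'] := first_in_reach pu uT lastT.
apply: (mem_nbh_comp_of vT _ ec' (first_in_in lastT)); rewrite inE.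
have cT : c \notin T by have := subsetP (comp_of_subC e vT) _ cC'; rewrite inE.
rewrite inE in cC'; apply: connect_trans cC' (connect_trans _ uc').
by apply: connect1; rewrite rel_minusE ecu cT.
Qed.

Lemma first_in_inj : {in T' &, injective f}.
Proof.
have f_kept u : u \in T :\: L -> f u = u.
  by case/setDP => uT _; apply: first_in_id.
have kept_eq u1 u2 : u1 \in T :\: L -> u2 \in T' -> f u1 = f u2 -> u1 = u2.
  move=> u1TL; rewrite f_kept // => /setUP[/f_kept -> // | u2LR] u1f.
  case/setDP: u1TL => _ /negP[]; have [_ /allP pL _] := p_path u2LR.
  by apply: pL; rewrite u1f first_in_mem.
move=> u1 u2 u1T' u2T' fu12.
case/setUP: (u1T') => [u1TL | u1LR]; first exact: kept_eq.
case/setUP: (u2T') => [u2TL | u2LR]; first by apply/esym/kept_eq/esym.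
apply/eqP; apply: contraT => u12; have := p_disjoint u1LR u2LR u12.
rewrite !map_id => /disjointFr/(_ (first_in_mem T u1 (p u1))).
by rewrite -/(f u1) fu12 first_in_mem.
Qed.

Lemma card_nbh_right_comp v :
  v \in (R :\: L) :\: T -> #|nbh e (comp_of e T' v)| <= adhesion e T.
Proof.
move=> vRLT; have vT' := right_notin_rerouted vRLT.
have /setDP[_ vT] := vRLT.
have f_inj : {in nbh e (comp_of e T' v) &, injective f}.
  move=> u1 u2 /(subsetP (nbh_comp_of_sub e vT')) u1T'.
  by move=> /(subsetP (nbh_comp_of_sub e vT')); apply: first_in_inj.
rewrite -(card_in_imset f_inj).
apply: leq_trans (card_nbh_comp_of_le_adhesion e vT).
apply/subset_leq_card/subsetP => _ /imsetP[u uN ->].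
exact: first_in_nbh_right_comp.
Qed.

End LeanPaths.

Lemma adhesion_rerouted :
  lean e T L R -> adhesion e T' <= maxn #|L :&: R| (adhesion e T).
Proof.
case=> p [p_path p_disjoint].
apply/bigmax_leqP => v /notin_rerouted[vLR | vRLT].
  exact/(leq_trans (card_nbh_left_comp vLR))/leq_maxl.
exact/(leq_trans (card_nbh_right_comp p_path p_disjoint vRLT))/leq_maxr.
Qed.

End Rerouting.

Lemma ler_div_double_maxn (F : numFieldType) (a s : nat) :
  s < a -> (a%:R / (2 * maxn 1 s)%:R <= (a - s)%:R :> F)%R.
Proof.
move=> lt_sa; rewrite ler_pdivrMr ?ltr0n; last by lia.
by rewrite -natrM ler_nat; nia.
Qed.

Theorem lemma5p8 (V : finType) (e : rel V) (X T : {set V}) (k' : int)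
    (Ls Rs : {set V}) :
  simple_graph e ->
  X \subset T ->
  witness e X T k' Ls Rs ->
  lean e T Ls Rs ->
  let T' := (T :\: Ls) :|: (Ls :&: Rs) in
  adhesion e T' <= maxn #|Ls :&: Rs| (adhesion e T) /\
  ((#|T|%:R - #|T'|%:R : rat) >=
     #|Ls :&: T|%:R / (2 * maxn 1 #|Ls :&: Rs|)%:R)%R.
Proof.
move=> [e_sym _] _ [cutLR _ lt_RT _] leanLR T'.
split; first exact: adhesion_rerouted.
have -> : #|T| = #|T'| + (#|Ls :&: T| - #|Ls :&: Rs|).
  by have := card_rerouted Ls Rs T; move: lt_RT; rewrite /T'; lia.
by rewrite natrD addrAC subrr add0r ler_div_double_maxn.
Qed.
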